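(* Let $4\le k\le\infty$ and let $\Gamma=(V,E)$ be a graph of girth $\geq 4$. Let $\widetilde\Gamma$ be the graph whose vertices are the pairs $(v,\sigma)$ with $v\in V$, $\sigma\in V\cup E$ and $v\subset\sigma$ (i.e. $\sigma=v$ or $\sigma$ is an edge containing $v$), where $(v,\sigma)$ and $(v',\sigma')$ are adjacent if either $v=v'$, or $v,v'$ are adjacent in $\Gamma$ and $\sigma\in\{v,vv'\}$, $\sigma'\in\{v',vv'\}$. Then the flag complex spanned on $\widetilde\Gamma$ is $k$-large if and only if $\Gamma$ has girth $\geq k$.
   Context: The flag complex spanned on a graph has a simplex for each finite clique. A cycle is a subcomplex that is a subdivision of the circle; it is full if every simplex spanned by its vertices lies in it. A flag complex is $k$-large if it has no full cycle of length $<k$. *)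

From mathcomp Require Import all_boot.
From Stdlib Require Import List.
Set Implicit Arguments. Unset Strict Implicit. Unset Printing Implicit Defensive.

Definition simple_graph (V : Type) (adj : V -> V -> Prop) : Prop :=
  (forall x y, adj x y -> adj y x) /\ (forall x, ~ adj x x).

(* Extended naturals for 4 <= k <= oo : [None] stands for oo. *)
Definition lt_ext (n : nat) (k : option nat) : Prop :=
  match k with Some m => n < m | None => True end.
Definition le_ext (n : nat) (k : option nat) : Prop :=
  match k with Some m => n <= m | None => True end.

Definition graph_cycle (V : Type) (adj : V -> V -> Prop) (n : nat)
    (c : 'I_n -> V) : Prop :=
  3 <= n /\ injective c /\ forall i : 'I_n, adj (c i) (c (ordS i)).

Definition girth_ge (V : Type) (adj : V -> V -> Prop) (k : option nat) : Prop :=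
  forall (n : nat) (c : 'I_n -> V), graph_cycle adj c -> ~ lt_ext n k.

Definition finite_nonempty (T : Type) (s : T -> Prop) : Prop :=
  (exists l : list T, forall x, s x <-> In x l) /\ (exists x, s x).

Definition flag_simplex (T : Type) (adj : T -> T -> Prop) (s : T -> Prop) : Prop :=
  finite_nonempty s /\ forall x y, s x -> s y -> x <> y -> adj x y.

Definition cycle_simplex (T : Type) (n : nat) (c : 'I_n -> T) (s : T -> Prop) : Prop :=
  exists i : 'I_n,
    (forall x, s x <-> x = c i) \/ (forall x, s x <-> x = c i \/ x = c (ordS i)).

Definition complex_cycle (T : Type) (adj : T -> T -> Prop) (n : nat)
    (c : 'I_n -> T) : Prop :=
  3 <= n /\ injective c /\
  forall s, cycle_simplex c s -> flag_simplex adj s.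

Definition full_cycle (T : Type) (adj : T -> T -> Prop) (n : nat)
    (c : 'I_n -> T) : Prop :=
  complex_cycle adj c /\
  forall s, flag_simplex adj s -> (forall x, s x -> exists i, x = c i) ->
    cycle_simplex c s.

Definition k_large (T : Type) (adj : T -> T -> Prop) (k : option nat) : Prop :=
  forall (n : nat) (c : 'I_n -> T), full_cycle adj c -> ~ lt_ext n k.

(* The graph tilde Gamma.  A vertex (v, sigma) is encoded by a pair (v, w)
   with w = v (sigma = v) or w adjacent to v (sigma = the edge vw). *)
Definition tvert (V : Type) (adj : V -> V -> Prop) : Type :=
  {p : V * V | p.2 = p.1 \/ adj p.1 p.2}.

Definition tadj (V : Type) (adj : V -> V -> Prop) (x y : tvert adj) : Prop :=
  let v := (proj1_sig x).1 in let w := (proj1_sig x).2 in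
  let v' := (proj1_sig y).1 in let w' := (proj1_sig y).2 in
  x <> y /\
  (v = v' \/ (adj v v' /\ (w = v \/ w = v') /\ (w' = v' \/ w' = v))).

(* A full cycle of a flag complex is the same as a chordless cycle of length
   at least 4 in its graph.  A chordless cycle v_1 ... v_m of Gamma, which has
   m >= 4 by the girth hypothesis, lifts to the chordless cycle
   (v_1, v_1) ... (v_m, v_m) of tilde Gamma.  Conversely, the projection
   (v, s) |-> v sends a chordless cycle of tilde Gamma to a closed walk which
   pauses at most one step at each vertex, never revisits a vertex otherwise,
   and takes at least three values; deleting the pauses leaves a cycle of
   Gamma that is not longer. *)

From mathcomp Require Import all_boot zify.
From Stdlib Require Import Classical.
Set Implicit Arguments. Unset Strict Implicit.

Lemma lt_ext_leq m n (k : option nat) : m <= n -> lt_ext n k -> lt_ext m k.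
Proof. by case: k => //= k; apply: leq_ltn_trans. Qed.

Definition ord_near n (i j : 'I_n) : Prop := i = j \/ j = ordS i \/ i = ordS j.

Lemma val_iter_ordS n (i : 'I_n) k : val (iter k (@ordS n) i) = (i + k) %% n.
Proof.
elim: k => [|k IHk] /=; first by rewrite addn0 modn_small.
by rewrite IHk -addn1 modnDml addn1 addnS.
Qed.

Lemma iter_ordS_fix n (i : 'I_n) k : 0 < k -> iter k (@ordS n) i = i -> n <= k.
Proof.
move=> k_gt0 /(congr1 val); rewrite val_iter_ordS => Ei.
have : i + k == i + 0 %[mod n] by rewrite Ei addn0 modn_small.
by rewrite eqn_modDl mod0n => /dvdn_leq; apply.
Qed.

Lemma ordS_neq n (i : 'I_n) : 1 < n -> ordS i <> i.
Proof. by move=> n_gt1 /(iter_ordS_fix (k := 1) isT); lia. Qed.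

Lemma not_near_iter_ordS n (i : 'I_n) d :
  2 <= d -> d + 2 <= n -> ~ ord_near i (iter d (@ordS n) i).
Proof.
move=> d_ge2 dn [E|[E|E]].
- by have := iter_ordS_fix (ltnW d_ge2) (esym E); lia.
- move: E; rewrite -(prednK (ltnW d_ge2)) iterSr => /iter_ordS_fix.
  by rewrite -ltnS prednK; [move=> /(_ d_ge2); lia | exact: ltnW].
- by have := iter_ordS_fix (k := d.+1) isT (esym E); lia.
Qed.

Lemma not_near_lt n (i j : 'I_n.+1) : i < j -> ~ ord_near i j -> i.+2 <= j /\ j - i < n.
Proof.
move=> ij ij_far; have j_lt := ltn_ord j; split.
  case: (leqP i.+2 j) => // ji; case: ij_far; right; left.
  by apply: val_inj; rewrite /= modn_small; lia.
case: (ltnP (j - i) n) => // ji; case: ij_far; right; right.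
apply: val_inj => /=; have -> : j.+1 = n.+1 by lia.
by rewrite modnn; lia.
Qed.

Lemma ord3_cases (i : 'I_3) : i = ord0 \/ i = ordS ord0 \/ i = ordS (ordS ord0).
Proof.
by case: i => [[|[|[|m]]] i_lt]; [left|right; left|right; right|]; try apply: val_inj.
Qed.

Lemma ord3_near (i j : 'I_3) : ord_near i j.
Proof.
suff : val i = val j \/ val j = val (ordS i) \/ val i = val (ordS j).
  by case=> [/val_inj|[/val_inj|/val_inj]]; rewrite /ord_near; auto.
by case: i j => [[|[|[|?]]] ?] [[|[|[|?]]] ?]; rewrite //=; auto.
Qed.

Lemma lift_ordS n (d : 'I_n.+1) (j : 'I_n) :
  lift d (ordS j) = ordS (lift d j) \/
  ordS (lift d j) = d /\ lift d (ordS j) = ordS d.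
Proof.
suff : val (lift d (ordS j)) = val (ordS (lift d j)) \/
       val (ordS (lift d j)) = val d /\ val (lift d (ordS j)) = val (ordS d).
  by case=> [/val_inj->|[/val_inj-> /val_inj->]]; [left|right].
case: d j => b b_lt [a a_lt]; rewrite /= /bump /=.
case: (ltnP a.+1 n) => [a1_lt|a1_ge].
- rewrite (modn_small a1_lt).
  case: (leqP b a) => ba; case: (leqP b a.+1) => ba1 /=.
  + by left; rewrite modn_small; lia.
  + lia.
  + by right; rewrite ?modn_small; lia.
  + by left; rewrite modn_small; lia.
- have a1n : a.+1 = n by lia.
  rewrite a1n modnn.
  case: (leqP b a) => ba; case: (leqP b 0) => b0 /=.
  + have -> : b = 0 by lia.
    by right; rewrite add1n a1n modnn modn_small; lia.
  + by left; rewrite add1n a1n modnn; lia.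
  + lia.
  + have bn : b = n by lia.
    by right; rewrite addn0 a1n bn modnn modn_small; lia.
Qed.

Definition chordless (T : Type) (adj : T -> T -> Prop) n (c : 'I_n -> T) : Prop :=
  forall i j, adj (c i) (c j) -> ord_near i j.

Section FlagComplex.
Variables (T : Type) (adj : T -> T -> Prop).
Hypothesis adj_sym : forall x y, adj x y -> adj y x.

Lemma flag_simplex_pair x y (s : T -> Prop) :
  (forall z, s z <-> z = x \/ z = y) -> (x <> y -> adj x y) -> flag_simplex adj s.
Proof.
move=> Es xy_adj; split; first split.
- exists [:: x; y] => z; rewrite Es /=.
  by split; [case=> ->; auto | case=> [<-|[<-|[]]]; auto].
- by exists x; apply/Es; left.
- move=> a b /Es [->|->] /Es [->|->] ab_neq //; first exact: xy_adj.
  by apply: adj_sym; apply: xy_adj => E; apply: ab_neq.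
Qed.

Lemma full_cycle_graph_cycle n (c : 'I_n -> T) : full_cycle adj c -> graph_cycle adj c.
Proof.
case=> [[n_ge3 [c_inj c_simplex]] _]; split=> //; split=> // i.
have [_ c_clique] := c_simplex (fun z => z = c i \/ z = c (ordS i))
  (ex_intro _ i (or_intror (fun _ => iff_refl _))).
apply: c_clique; auto => /c_inj /esym; apply: ordS_neq; lia.
Qed.

Lemma full_cycle_chordless n (c : 'I_n -> T) : full_cycle adj c -> chordless adj c.
Proof.
case=> [[_ [c_inj _]] c_full] i j ij_adj.
have [|l [E|E]] := c_full _ (flag_simplex_pair (s := fun z => z = c i \/ z = c j)
  (fun _ => iff_refl _) (fun _ => ij_adj)).
- by move=> z [->|->]; [exists i | exists j].
- have /E ei : c i = c i \/ c i = c j by left.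
  have /E ej : c j = c i \/ c j = c j by right.
  by left; apply: c_inj; rewrite ei ej.
have ci_in : c i = c i \/ c i = c j by left.
have cj_in : c j = c i \/ c j = c j by right.
case/E: ci_in => /c_inj->; case/E: cj_in => /c_inj->; rewrite /ord_near; auto.
Qed.

Lemma full_cycle_ge4 n (c : 'I_n -> T) : full_cycle adj c -> 4 <= n.
Proof.
move=> c_full; have [n_ge3 [c_inj c_adj]] := full_cycle_graph_cycle c_full.
case: (ltnP 3 n) => // n_le3; have n3 : n = 3 by lia.
subst n; have [_ c_full'] := c_full.
have c_flag : flag_simplex adj (fun x => exists i, x = c i).
  split; first split.
  - exists [:: c ord0; c (ordS ord0); c (ordS (ordS ord0))] => x.
    split=> [[i ->]|]; last by case=> [<-|[<-|[<-|[]]]]; eexists.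
    by case: (ord3_cases i) => [->|[->|->]] /=; auto.
  - by exists (c ord0), ord0.
  move=> x y [i ->] [j ->] xy_neq.
  case: (ord3_near i j) => [E|[->|->]]; [by rewrite E in xy_neq | exact: c_adj|].
  exact/adj_sym/c_adj.
have [l [E|E]] := c_full' _ c_flag (fun _ x_in => x_in).
  have /E /c_inj := ex_intro (fun i => c (ordS l) = c i) (ordS l) erefl.
  by move/(ordS_neq (n := 3) isT).
have /E [/c_inj|/c_inj] := ex_intro (fun i => c (ordS (ordS l)) = c i) _ erefl.
  by move/(iter_ordS_fix (k := 2) isT).
by move/(ordS_neq (n := 3) isT).
Qed.

Lemma chordless_full_cycle n (c : 'I_n -> T) :
  graph_cycle adj c -> chordless adj c -> 4 <= n -> full_cycle adj c.
Proof.
move=> [n_ge3 [c_inj c_adj]] c_chordless n_ge4; split.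
  split=> //; split=> // s [i [E|E]]; last exact: flag_simplex_pair E (fun _ => c_adj i).
  apply: (flag_simplex_pair (x := c i) (y := c i)) => // z.
  by split=> [/E ->|[] /E]; [left|..].
move=> s [[_ [x s_x]] s_clique] s_sub.
have [i x_i] := s_sub _ s_x; subst x.
case: (classic (forall y, s y -> y = c i)) => [s_single|].
  by exists i; left=> y; split=> [/s_single|->].
move=> /not_all_ex_not [y] /(imply_to_and (s y)) [s_y y_neq].
have [j y_j] := s_sub _ s_y; subst y.
have s_edge a : s (c a) -> s (c (ordS a)) -> cycle_simplex c s.
  move=> s_a s_Sa; exists a; right=> y'; split; last by case=> ->.
  move=> s_y'; have [l y'_l] := s_sub _ s_y'; subst y'.
  case: (classic (l = a)) => [->|l_a]; first by left.
  case: (classic (l = ordS a)) => [->|l_Sa]; first by right.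
  have := c_chordless _ _ (s_clique _ _ s_y' s_a (fun E => l_a (c_inj _ _ E))).
  have := c_chordless _ _ (s_clique _ _ s_y' s_Sa (fun E => l_Sa (c_inj _ _ E))).
  move=> [E|[/ordS_inj E|l_SSa]]; [by case: l_Sa | by case: l_a | ].
  move=> [E|[a_Sl|E]]; [by case: l_a | | by case: l_Sa].
  have : iter 3 (@ordS n) a = a by rewrite /= -l_SSa a_Sl.
  by move/(iter_ordS_fix (k := 3) isT); lia.
case: (c_chordless _ _ (s_clique _ _ s_x s_y (fun E => y_neq (esym E)))) => [ij|[ji|ij]].
- by case: y_neq; rewrite ij.
- by apply: (s_edge i); rewrite -?ji.
- by apply: (s_edge j); rewrite -?ij.
Qed.
End FlagComplex.

Section GraphCycles.
Variables (V : Type) (adj : V -> V -> Prop).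

Lemma graph_cycle_chord n (c : 'I_n.+1 -> V) (i j : 'I_n.+1) :
  graph_cycle adj c -> adj (c j) (c i) -> i.+2 <= j ->
  graph_cycle adj (fun t : 'I_(j - i).+1 => c (inord (i + t))).
Proof.
move=> [_ [c_inj c_adj]] ji_adj ij; have j_lt := ltn_ord j; split; first lia.
split=> [t t' /c_inj /(congr1 val)|t] /=.
  have t_lt := ltn_ord t; have t'_lt := ltn_ord t'.
  by rewrite !inordK; [move=> E; apply: val_inj => /=; lia | lia..].
have t_lt := ltn_ord t.
case: (ltnP t (j - i)) => [t_lt'|t_ge].
  have -> : inord (i + ordS t) = ordS (inord (i + t) : 'I_n.+1).
    by apply: val_inj => /=; rewrite !inordK; rewrite ?modn_small; lia.
  exact: c_adj.
have -> : inord (i + ordS t) = i.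
  apply: val_inj => /=; have -> : t.+1 = (j - i).+1 by lia.
  by rewrite modnn addn0 inordK.
have -> // : inord (i + t) = j.
by apply: val_inj => /=; rewrite inordK; lia.
Qed.

Hypothesis adj_sym : forall x y, adj x y -> adj y x.
Hypothesis adj_irrefl : forall x, ~ adj x x.

Lemma exists_chordless_cycle n (c : 'I_n -> V) : graph_cycle adj c ->
  exists m, m <= n /\ exists c' : 'I_m -> V, graph_cycle adj c' /\ chordless adj c'.
Proof.
elim/ltn_ind: n c => n IHn c c_cycle.
case: (classic (chordless adj c)) => [c_chordless|]; first by exists n; split=> //; exists c.
move=> /not_all_ex_not [i /not_all_ex_not [j /(imply_to_and (adj _ _)) [ij_adj ij_far]]].
case: n IHn c c_cycle i j ij_adj ij_far => [|n] IHn c c_cycle i j ij_adj ij_far.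
  by case: c_cycle.
wlog ij : i j ij_adj ij_far / i < j.
  move=> wlog_lt; case: (ltngtP i j) => [ij|ji|/val_inj ij]; first exact: wlog_lt ij.
    apply: (wlog_lt j i) => //; first exact: adj_sym.
    by move=> [E|[E|E]]; apply: ij_far; rewrite /ord_near; auto.
  by move: ij_adj; rewrite ij => /adj_irrefl.
have [ij2 ji_lt] := not_near_lt ij ij_far.
have [m [mj [c' c'_chordless]]] :=
  IHn _ (ji_lt : (j - i).+1 < n.+1) _ (graph_cycle_chord c_cycle (adj_sym ij_adj) ij2).
by exists m; split; [lia | exists c'].
Qed.
End GraphCycles.

Definition lazy_closed_walk (T : Type) (adj : T -> T -> Prop) n (p : 'I_n -> T) : Prop :=
  forall i, p i = p (ordS i) \/ adj (p i) (p (ordS i)).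

Definition has_three_values (T : Type) n (p : 'I_n -> T) : Prop :=
  exists a b c, p a <> p b /\ p b <> p c /\ p a <> p c.

Lemma has_three_values_ge3 (T : Type) n (p : 'I_n -> T) : has_three_values p -> 3 <= n.
Proof.
move=> [a [b [c [ab [bc ac]]]]].
have abc_uniq : uniq [:: a; b; c].
  rewrite /= !inE negb_or andbT -andbA.
  by apply/and3P; split; apply/eqP => E; [apply: ab | apply: ac | apply: bc]; rewrite E.
by rewrite -(size_enum_ord n); apply: (uniq_leq_size abc_uniq) => x; rewrite mem_enum.
Qed.

Lemma near_of_eq_lift (T : Type) n (p : 'I_n.+1 -> T) (d : 'I_n.+1) :
  (forall i j, p i = p j -> ord_near i j) ->
  forall i j, p (lift d i) = p (lift d j) -> ord_near i j.
Proof.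
move=> p_near i j /p_near [/lift_inj ij|[ji|ij]]; first by left.
  case: (lift_ordS d i) => [Si|[Si _]]; last by have := neq_lift d j; rewrite ji Si eqxx.
  by right; left; apply: (@lift_inj _ d); rewrite ji Si.
case: (lift_ordS d j) => [Sj|[Sj _]]; last by have := neq_lift d i; rewrite ij Sj eqxx.
by right; right; apply: (@lift_inj _ d); rewrite ij Sj.
Qed.

Section DropRepeat.
Variables (T : Type) (adj : T -> T -> Prop) (n : nat) (p : 'I_n.+1 -> T) (d : 'I_n.+1).
Hypothesis p_repeat : p d = p (ordS d).

Lemma lazy_closed_walk_drop :
  lazy_closed_walk adj p -> lazy_closed_walk adj (fun j => p (lift d j)).
Proof.
move=> p_walk j; case: (lift_ordS d j) => [->|[Sj_d ->]]; first exact: p_walk.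
by have := p_walk (lift d j); rewrite Sj_d p_repeat.
Qed.

Lemma has_three_values_drop : has_three_values p -> has_three_values (fun j => p (lift d j)).
Proof.
move=> p_three; have n_ge2 : 1 < n.+1 by have := has_three_values_ge3 p_three; lia.
have p_range i : exists j, p i = p (lift d j).
  case: (unliftP d i) => [j ->|->]; first by exists j.
  case: (unliftP d (ordS d)) => [j Sd|/(ordS_neq n_ge2) //].
  by exists j; rewrite p_repeat Sd.
case: p_three => a [b [c [ab [bc ac]]]].
case: (p_range a) => a' Ea; case: (p_range b) => b' Eb; case: (p_range c) => c' Ec.
by exists a', b', c'; rewrite -Ea -Eb -Ec.
Qed.
End DropRepeat.

Lemma lazy_closed_walk_cycle (T : Type) (adj : T -> T -> Prop) n (p : 'I_n -> T) :
  lazy_closed_walk adj p -> (forall i j, p i = p j -> ord_near i j) ->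
  has_three_values p -> exists m, m <= n /\ exists c : 'I_m -> T, graph_cycle adj c.
Proof.
elim: n p => [|n IHn] p p_walk p_near p_three.
  by have := has_three_values_ge3 p_three.
case: (classic (exists d, p d = p (ordS d))) => [[d p_rep]|no_repeat].
  have [m [mn c_cycle]] := IHn _ (lazy_closed_walk_drop p_rep p_walk)
    (near_of_eq_lift (d := d) p_near) (has_three_values_drop p_rep p_three).
  by exists m; split=> //; lia.
exists n.+1; split=> //; exists p; split; first exact: has_three_values_ge3 p_three.
split=> [i j pij|i]; last by case: (p_walk i) => // rep; case: no_repeat; exists i.
case: (p_near _ _ pij) => [//|[ji|ij]]; case: no_repeat.
  by exists i; rewrite -ji.
by exists j; rewrite -ij.
Qed.

Section Tilde.
Variables (V : Type) (adj : V -> V -> Prop).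
Hypothesis adj_sym : forall x y, adj x y -> adj y x.

Definition tproj (x : tvert adj) : V := (proj1_sig x).1.

Lemma tadj_sym (x y : tvert adj) : tadj x y -> tadj y x.
Proof.
case=> xy [E|[xy_adj [x2 y2]]]; split=> [E'|]; try by apply: xy.
  by left.
by right; split; [exact: adj_sym | split].
Qed.

Lemma tadj_tproj (x y : tvert adj) :
  tadj x y -> tproj x = tproj y \/ adj (tproj x) (tproj y).
Proof. by case=> _ [E|[xy_adj _]]; [left | right]. Qed.

Lemma tadj_of_tproj_eq (x y : tvert adj) : tproj x = tproj y -> x <> y -> tadj x y.
Proof. by move=> E xy; split=> //; left. Qed.

(* Across different fibres, adjacency of (v, s) and (v', s') only asks that
   v v' be an edge, s lie in {v, vv'} and s' lie in {v', vv'}: each endpoint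
   is constrained separately, so the conditions can be read off two other
   pairs of adjacent vertices in the same fibres. *)
Lemma tadj_exchange (a b c d : tvert adj) :
  tadj b c -> tadj d a -> tproj a = tproj b -> tproj c = tproj d ->
  tproj a <> tproj c -> tadj a c.
Proof.
case: a b c d => [[a1 a2] ?] [[b1 b2] ?] [[c1 c2] ?] [[d1 d2] ?].
rewrite /tadj /tproj /= => [[_ bc]] [_ da] ab cd ac; subst b1 d1.
split=> [[E _]|]; first exact: ac.
case: bc => [//|[bc_adj [b2_ok c2_ok]]]; case: da => [E|[_ [_ a2_ok]]]; first by case: ac.
by right.
Qed.

Section Projection.
Variables (n : nat) (c : 'I_n -> tvert adj).
Hypotheses (c_cycle : graph_cycle (@tadj V adj) c) (c_chordless : chordless (@tadj V adj) c).
Hypothesis n_ge4 : 4 <= n.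

Lemma tproj_lazy_closed_walk : lazy_closed_walk adj (fun i => tproj (c i)).
Proof. by move=> i; apply: tadj_tproj; case: c_cycle => _ [_]. Qed.

Lemma tproj_eq_near i j : tproj (c i) = tproj (c j) -> ord_near i j.
Proof.
move=> E; case: (eqVneq i j) => [->|ij]; first by left.
apply: c_chordless; apply: tadj_of_tproj_eq => // /(proj1 (proj2 c_cycle)) ij_eq.
by rewrite ij_eq eqxx in ij.
Qed.

Lemma tadj_iter_far i d : 2 <= d -> d + 2 <= n -> ~ tadj (c i) (c (iter d (@ordS n) i)).
Proof. by move=> d_ge2 dn /c_chordless; apply: not_near_iter_ordS. Qed.

Lemma tproj_iter_far i d :
  2 <= d -> d + 2 <= n -> tproj (c i) <> tproj (c (iter d (@ordS n) i)).
Proof. by move=> d_ge2 dn /tproj_eq_near; apply: not_near_iter_ordS. Qed.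

(* At an index i where the projection changes, the values along i, ..., i+3
   take three values unless they read a b b a; that pattern would make c i
   adjacent to c (i+2) by [tadj_exchange]. *)
Lemma tproj_has_three_values : has_three_values (fun i => tproj (c i)).
Proof.
have c_adj i : tadj (c i) (c (ordS i)) by case: c_cycle => _ [_].
have n_gt0 : 0 < n by lia.
have [i q01] : exists i, tproj (c i) <> tproj (c (ordS i)).
  pose i0 := Ordinal n_gt0.
  case: (classic (tproj (c i0) = tproj (c (ordS i0)))) => [E|]; last by exists i0.
  by exists (ordS i0); rewrite -E; apply: (tproj_iter_far (d := 2)).
have q02 := tproj_iter_far (i := i) (d := 2) isT n_ge4.
have q13 := tproj_iter_far (i := ordS i) (d := 2) isT n_ge4.
case: (classic (tproj (c (ordS i)) = tproj (c (iter 2 (@ordS n) i)))) => [q12|q12];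
  last by exists i, (ordS i), (iter 2 (@ordS n) i).
case: (classic (tproj (c i) = tproj (c (iter 3 (@ordS n) i)))) => [q03|q03];
  last by exists i, (ordS i), (iter 3 (@ordS n) i).
case: (tadj_iter_far (i := i) (d := 2) isT n_ge4).
apply: (tadj_exchange (b := c (iter 3 (@ordS n) i)) (d := c (ordS i))) => //.
- exact/tadj_sym/(c_adj (iter 2 (@ordS n) i)).
- exact/tadj_sym/c_adj.
Qed.

Lemma tproj_cycle : exists m, m <= n /\ exists c' : 'I_m -> V, graph_cycle adj c'.
Proof.
exact: lazy_closed_walk_cycle tproj_lazy_closed_walk tproj_eq_near tproj_has_three_values.
Qed.
End Projection.

Hypothesis adj_irrefl : forall x, ~ adj x x.

Definition tdiag (v : V) : tvert adj :=
  exist (fun p : V * V => p.2 = p.1 \/ adj p.1 p.2) (v, v) (or_introl erefl).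

Lemma tadj_diag v w : tadj (tdiag v) (tdiag w) <-> adj v w.
Proof.
split=> [[vw [/= E|[//]]]|vw]; first by case: vw; rewrite E.
split=> [/(congr1 tproj) E|]; first by move: vw; rewrite [v]E => /adj_irrefl.
by right; split=> //; split; left.
Qed.

Lemma graph_cycle_diag n (c : 'I_n -> V) :
  graph_cycle adj c -> graph_cycle (@tadj V adj) (fun i => tdiag (c i)).
Proof.
case=> n_ge3 [c_inj c_adj]; split=> //; split=> [i j /(congr1 tproj) /c_inj //|i].
exact/tadj_diag.
Qed.

Lemma chordless_diag n (c : 'I_n -> V) :
  chordless adj c -> chordless (@tadj V adj) (fun i => tdiag (c i)).
Proof. by move=> c_chordless i j /tadj_diag /c_chordless. Qed.
End Tilde.

Theorem lemma2p9 (V : Type) (adj : V -> V -> Prop) (k : option nat) :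
  simple_graph adj -> le_ext 4 k -> girth_ge adj (Some 4) ->
  (k_large (@tadj V adj) k <-> girth_ge adj k).
Proof.
move=> [adj_sym adj_irrefl] _ girth_ge4; have tadj_sym := tadj_sym adj_sym; split.
- move=> k_large_t n c c_cycle n_lt_k.
  have [m [mn [c' [c'_cycle c'_chordless]]]] :=
    exists_chordless_cycle adj_sym adj_irrefl c_cycle.
  have m_ge4 : 4 <= m by case: (ltnP m 4) => // /(girth_ge4 m c' c'_cycle).
  have := chordless_full_cycle tadj_sym (graph_cycle_diag adj_irrefl c'_cycle)
    (chordless_diag adj_irrefl c'_chordless) m_ge4.
  by move/k_large_t; apply; apply: lt_ext_leq n_lt_k.
- move=> girth_ge_k n c c_full n_lt_k.
  have [m [mn [c' c'_cycle]]] := tproj_cycle adj_sym (full_cycle_graph_cycle c_full)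
    (full_cycle_chordless tadj_sym c_full) (full_cycle_ge4 tadj_sym c_full).
  exact: girth_ge_k m c' c'_cycle (lt_ext_leq mn n_lt_k).
Qed.
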